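(* Fix $0<q<1$. For every $G\in\mathcal G$ with $G\ne E$, $$-\log\Big(\frac{q}{1-q}\|G-E\|\Big)\le T_q(G)\le\frac{1-q}{q}\cdot\frac{1}{\|G-E\|}.$$
   Context: $E(t)=1-e^{-t}$, $\bar E=1-E$, $\bar G=1-G$. $\mathcal G=\{E\#F:F$ a probability distribution on $[1,\infty)\}$ with $(E\#F)(t)=\int E(t/\mu)\,dF(\mu)$. $T_q(G)=\inf\{t:\bar G(t)\ge\frac1q\bar E(t)\}$. $\|G-G'\|=\sup_t|G(t)-G'(t)|$ is the Kolmogorov–Smirnov distance. *)

From HB Require Import structures.
From mathcomp Require Import all_boot all_order all_algebra.
From mathcomp Require Import all_classical all_reals all_analysis.
Set Implicit Arguments. Unset Strict Implicit. Unset Printing Implicit Defensive.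
Import Order.TTheory GRing.Theory Num.Theory.
Local Open Scope classical_set_scope.
Local Open Scope ring_scope.

Definition Eexp (R : realType) (t : R) : R := 1 - expR (- t).

Definition mixE (R : realType) (F : probability R R) (t : R) : R :=
  Rintegral F `[1, +oo[%classic (fun mu => Eexp (t / mu)).

Definition KS (R : realType) (G G' : R -> R) : R :=
  sup [set `|G t - G' t| | t in [set t : R | 0 <= t]].

Definition Tq (R : realType) (q : R) (G : R -> R) : R :=
  inf [set t : R | 0 <= t /\ (1 - G t >= q^-1 * (1 - Eexp t))].

(* With x = 1/mu in (0, 1], 1 - (E # F)(t) averages e^{-t x}; the tangent at
   x = 1 and the chord over [0, 1] of this convex function of x give
     e^{-t} (1 + t m) <= 1 - G(t) <= e^{-t} + (1 - e^{-t}) m,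
   where m = \int (1 - 1/mu) dF.  Hence 0 <= E(t) - G(t) <= m for t >= 0, so
   ||G - E|| <= m, and m > 0 because both bounds collapse to G = E when m = 0.
   At t = (1-q)/(q ||G - E||) we get t m >= (1-q)/q, so the lower bound already
   reaches e^{-t}/q: this is the upper bound on T_q.  Conversely, if
   1 - G(t) >= e^{-t}/q then ||G - E|| >= E(t) - G(t) >= (1-q)/q e^{-t},
   which is the lower bound. *)

From HB Require Import structures.
From mathcomp Require Import all_boot all_order all_algebra.
From mathcomp Require Import all_classical all_reals all_analysis.
From mathcomp Require Import measurable_realfun ring lra.
Import Order.TTheory GRing.Theory Num.Theory.
Local Open Scope classical_set_scope.
Local Open Scope ring_scope.

Section expR_bounds.
Context {R : realType}.

Lemma expRNM_ge_tangent (t x : R) :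
  expR (- t) * (1 + t * (1 - x)) <= expR (- (t * x)).
Proof.
have -> : - (t * x) = - t + t * (1 - x) by ring.
by rewrite expRD ler_wpM2l ?expR_ge0 ?expR_ge1Dx.
Qed.

Lemma expRNM_le_chord (t x : R) : 0 <= x <= 1 ->
  expR (- (t * x)) <= expR (- t) + (1 - expR (- t)) * (1 - x).
Proof.
case/andP=> x0 x1; have := convex_expR (Itv01 x0 x1) (- t) 0.
have -> : expR (- t) + (1 - expR (- t)) * (1 - x) = x * expR (- t) + (1 - x).
  by ring.
by rewrite !convRE /= expR0 mulr0 addr0 mulr1 mulrN mulrC.
Qed.

End expR_bounds.

Section mixture.
Context {R : realType}.
Variable F : probability R R.
Let D : set R := `[1, +oo[%classic.
Hypothesis F_supp : F D = 1%E.

Let measurable_D : measurable D. Proof. exact: measurable_itv. Qed.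

Let fine_FD : fine (F D) = 1. Proof. by rewrite F_supp. Qed.

Lemma invr_itv_ge1 (mu : R) : D mu -> 0 < mu^-1 <= 1.
Proof.
rewrite /D /= in_itv /= andbT => mu1; have mu0 := lt_le_trans ltr01 mu1.
by rewrite invr_gt0 mu0 invf_le1.
Qed.

Lemma measurable_fun_invr_itv_ge1 : measurable_fun D (GRing.inv : R -> R).
Proof.
have pos_itv : [set x : R | 0 < x] = `]0, +oo[%classic.
  by apply/seteqP; split => x; rewrite /= in_itv /= andbT.
apply: (@measurable_funS _ _ _ _ [set x : R | 0 < x]).
- by rewrite pos_itv; exact: measurable_itv.
- by move=> x /invr_itv_ge1 /andP[x0 _] /=; rewrite -invr_gt0.
apply: open_continuous_measurable_fun; first exact: open_gt.
by move=> x; rewrite inE /= => x0; apply: inv_continuous; rewrite gt_eqF.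
Qed.

Lemma bounded_integrable (f : R -> R) (M : R) :
  measurable_fun D f -> (forall x, D x -> `|f x| <= M) ->
  F.-integrable D (EFin \o f).
Proof.
move=> mf fM; have FD_fin : (F D < +oo)%E by rewrite F_supp ltry.
apply: (measurable_bounded_integrable measurable_D FD_fin mf).
exists M; split; first exact: num_real.
by move=> y My x Dx; apply: le_trans (fM x Dx) _; exact: ltW.
Qed.

Lemma integrable_cst (c : R) : F.-integrable D (EFin \o cst c).
Proof. exact: (@bounded_integrable _ `|c|). Qed.

Lemma integrable_affine_defect (c d : R) :
  F.-integrable D (EFin \o (fun mu => c + d * (1 - mu^-1))).
Proof.
apply: (@bounded_integrable _ (`|c| + `|d|)).
  apply: measurable_funD; first exact: measurable_cst.
  apply: measurable_funM; first exact: measurable_cst.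
  apply: measurable_funB; first exact: measurable_cst.
  exact: measurable_fun_invr_itv_ge1.
move=> x /invr_itv_ge1 /andP[x0 x1]; apply: le_trans (ler_normD _ _) _.
rewrite lerD2l normrM -[leRHS]mulr1 ler_wpM2l // ger0_norm ?subr_ge0 //; lra.
Qed.

Lemma integrable_scale_defect (d : R) :
  F.-integrable D (EFin \o (fun mu => d * (1 - mu^-1))).
Proof.
apply: eq_integrable (integrable_affine_defect 0 d) => // x _ /=.
by rewrite add0r.
Qed.

Lemma integrable_expRN_div (t : R) :
  F.-integrable D (EFin \o (fun mu => expR (- (t / mu)))).
Proof.
apply: (@bounded_integrable _ (expR `|t|)).
  apply: measurableT_comp; first exact: measurable_expR.
  apply: measurable_funN; apply: measurable_funM; first exact: measurable_cst.
  exact: measurable_fun_invr_itv_ge1.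
move=> x /invr_itv_ge1 /andP[x0 x1].
rewrite ger0_norm ?expR_ge0 // ler_expR; apply: le_trans (ler_norm _) _.
by rewrite normrN normrM -[leRHS]mulr1 ler_wpM2l // ger0_norm // ltW.
Qed.

Definition mixE_tail (t : R) := \int[F]_(mu in D) expR (- (t / mu)).

Definition inv_defect := \int[F]_(mu in D) (1 - mu^-1).

Lemma inv_defect_ge0 : 0 <= inv_defect.
Proof. by apply: Rintegral_ge0 => x /invr_itv_ge1 /andP[x0 x1]; lra. Qed.

Lemma Rintegral_affine_defect (c d : R) :
  \int[F]_(mu in D) (c + d * (1 - mu^-1)) = c + d * inv_defect.
Proof.
rewrite (RintegralD _ (integrable_cst c) (integrable_scale_defect d)) //.
rewrite Rintegral_cst // fine_FD mulr1 RintegralZl //.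
by apply: eq_integrable (integrable_scale_defect 1) => // x _ /=; rewrite mul1r.
Qed.

Lemma mixEE (t : R) : mixE F t = 1 - mixE_tail t.
Proof.
rewrite /mixE /Eexp (RintegralB _ (integrable_cst 1) (integrable_expRN_div t)) //.
by rewrite Rintegral_cst // fine_FD mulr1.
Qed.

Lemma mixE_tail_le (t : R) :
  mixE_tail t <= expR (- t) + (1 - expR (- t)) * inv_defect.
Proof.
rewrite -Rintegral_affine_defect; apply: le_Rintegral => //.
- exact: integrable_expRN_div.
- exact: integrable_affine_defect.
by move=> x /invr_itv_ge1 /andP[x0 x1]; apply: expRNM_le_chord; rewrite ltW.
Qed.

Lemma mixE_tail_ge (t : R) : expR (- t) * (1 + t * inv_defect) <= mixE_tail t.
Proof.
have -> : expR (- t) * (1 + t * inv_defect) =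
          expR (- t) + expR (- t) * t * inv_defect by ring.
rewrite -Rintegral_affine_defect; apply: le_Rintegral => //.
- exact: integrable_affine_defect.
- exact: integrable_expRN_div.
by move=> x _; have := expRNM_ge_tangent t x^-1; rewrite mulrDr mulr1 mulrA.
Qed.

End mixture.

Section Tq_bounds.
Context {R : realType} {q m : R} {G : R -> R}.
Hypotheses (q_gt0 : 0 < q) (q_lt1 : q < 1) (m_ge0 : 0 <= m).
Hypothesis G_ge : forall t, expR (- t) * (1 + t * m) <= 1 - G t.
Hypothesis G_le : forall t, 1 - G t <= expR (- t) + (1 - expR (- t)) * m.
Hypothesis G_neq : G <> @Eexp R.

Lemma defect_gt0 : 0 < m.
Proof.
rewrite lt_def m_ge0 andbT; apply/eqP => m0; apply/G_neq/funext => t.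
by have := G_ge t; have := G_le t; rewrite /Eexp m0 !mulr0 !addr0 mulr1; lra.
Qed.

Lemma dist_EexpE t : 0 <= t -> `|G t - Eexp t| = 1 - G t - expR (- t).
Proof.
move=> t0.
have -> : G t - Eexp t = - (1 - G t - expR (- t)) by rewrite /Eexp; ring.
rewrite normrN ger0_norm // subr_ge0; apply: le_trans (G_ge t).
by rewrite ler_pMr ?expR_gt0 // lerDl mulr_ge0.
Qed.

Lemma dist_Eexp_le t : 0 <= t -> `|G t - Eexp t| <= m.
Proof.
move=> t0; rewrite dist_EexpE //; have := G_le t.
by have := mulr_ge0 (expR_ge0 (- t)) m_ge0; lra.
Qed.

Let dists_neq0 : [set `|G t - Eexp t| | t in [set t : R | 0 <= t]] !=set0.
Proof. by exists `|G 0 - Eexp 0|; exists 0 => /=. Qed.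

Lemma KS_Eexp_le : KS G (@Eexp R) <= m.
Proof.
by apply: ge_sup => // _ [t t0 <-]; exact: dist_Eexp_le.
Qed.

Lemma dist_le_KS t : 0 <= t -> `|G t - Eexp t| <= KS G (@Eexp R).
Proof.
move=> t0; apply: sup_upper_bound; last by exists t.
split => //; exists m => _ [s s0 <-]; exact: dist_Eexp_le.
Qed.

Lemma KS_Eexp_gt0 : 0 < KS G (@Eexp R).
Proof.
apply: lt_le_trans (dist_le_KS 1 ler01); rewrite dist_EexpE //.
by have := G_ge 1; have := mulr_gt0 (expR_gt0 (- 1)) defect_gt0; lra.
Qed.

Let S := [set t : R | 0 <= t /\ (1 - G t >= q^-1 * (1 - Eexp t))].

Let invq : q^-1 = 1 + (1 - q) / q.
Proof. by rewrite mulrBl mul1r divff ?gt_eqF // addrC subrK. Qed.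

Let q_pos : 0 < (1 - q) / q.
Proof. by rewrite divr_gt0 // subr_gt0. Qed.

Lemma Tq_set_of_ge t : 0 <= t -> (1 - q) / q <= t * m -> S t.
Proof.
move=> t0 tm; split => //; rewrite /Eexp subKr; apply: le_trans (G_ge t).
by rewrite mulrC ler_wpM2l ?expR_ge0 // invq lerD2l.
Qed.

Lemma Tq_set_le_KS t : S t -> (1 - q) / q * expR (- t) <= KS G (@Eexp R).
Proof.
case=> t0 Gt; rewrite /Eexp subKr invq mulrDl mul1r in Gt.
by apply: le_trans (dist_le_KS t t0); rewrite dist_EexpE // lerBrDl.
Qed.

Lemma Tq_set_witness : S ((1 - q) / q * (KS G (@Eexp R))^-1).
Proof.
apply: Tq_set_of_ge; first by rewrite mulr_ge0 ?invr_ge0 ?ltW ?KS_Eexp_gt0.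
set r := (1 - q) / q.
by rewrite -mulrA ler_pMr // mulrC ler_pdivlMr ?KS_Eexp_gt0 // mul1r KS_Eexp_le.
Qed.

Lemma Tq_le_inv_KS : Tq q G <= (1 - q) / q * (KS G (@Eexp R))^-1.
Proof.
by apply: ge_inf; [exists 0 => t [] | exact: Tq_set_witness].
Qed.

Lemma Tq_ge_ln_KS : - ln (q / (1 - q) * KS G (@Eexp R)) <= Tq q G.
Proof.
apply: lb_le_inf; first by eexists; exact: Tq_set_witness.
move=> t St; rewrite lerNl -[- t]expRK ler_ln ?posrE ?expR_gt0 //; last first.
  by rewrite mulr_gt0 ?KS_Eexp_gt0 // divr_gt0 // subr_gt0.
by rewrite -invf_div ler_pdivlMl //; exact: Tq_set_le_KS.
Qed.

End Tq_bounds.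

Theorem lemma4p4 (R : realType) (q : R) (hq0 : 0 < q) (hq1 : q < 1)
  (F : probability R R) (hF : F `[1, +oo[%classic = 1%E)
  (hGE : mixE F <> @Eexp R) :
  - ln (q / (1 - q) * KS (mixE F) (@Eexp R)) <= Tq q (mixE F) /\
  Tq q (mixE F) <= (1 - q) / q * (KS (mixE F) (@Eexp R))^-1.
Proof.
have G_ge t : expR (- t) * (1 + t * inv_defect F) <= 1 - mixE F t.
  by rewrite (mixEE _ hF) subKr (mixE_tail_ge _ hF).
have G_le t : 1 - mixE F t <= expR (- t) + (1 - expR (- t)) * inv_defect F.
  by rewrite (mixEE _ hF) subKr (mixE_tail_le _ hF).
split.
- exact: (Tq_ge_ln_KS hq0 hq1 (inv_defect_ge0 F) G_ge G_le hGE).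
- exact: (Tq_le_inv_KS hq0 hq1 (inv_defect_ge0 F) G_ge G_le hGE).
Qed.
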